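(* Let $(\Lambda,d)$ be a $k$-graph and let $(\overline{\Lambda},\overline d)$ be the extension described in the context. Then $(\overline{\Lambda},\overline d)$ is a $k$-graph with no sources, i.e. $v\overline{\Lambda}^{n}\neq\emptyset$ for every vertex $v$ of $\overline{\Lambda}$ and every $n\in\mathbb{N}^k$.
   Context: A $k$-graph $(\Lambda,d)$ is a countable category with a degree functor $d:\Lambda\to\mathbb{N}^k$ satisfying unique factorization (if $d(\lambda)=m+n$ there are unique $\mu,\nu$ with $\lambda=\mu\nu$, $d(\mu)=m$, $d(\nu)=n$); $\Lambda^0$ vertices, $r,s$ range/source, $v\Lambda^n=\{\lambda:r(\lambda)=v,d(\lambda)=n\}$; a vertex $v$ is a source if $v\Lambda^n=\emptyset$ for some $n$. $e_i$ standard basis, $\le$ coordinatewise, $\vee,\wedge$ coordinatewise max/min. For $m\in(\mathbb{N}\cup\{\infty\})^k$, $\Omega_{k,m}$ has objects $\{p\in\mathbb{N}^k:p\le m\}$, morphisms $(p,q)$, $p\le q\le m$, $r(p,q)=p$, $s(p,q)=q$, $d(p,q)=q-p$. A graph morphism $x:\Omega_{k,m}\to\Lambda$ is a degree-preserving functor; $d(x)=m$, $x(a,b)=x((a,b))$, $x(a)=x(a,a)$. It is a boundary path if there is $n_x\in\mathbb{N}^k$, $n_x\le d(x)$, with $x(p)\Lambda^{e_i}=\emptyset$ whenever $p\in\mathbb{N}^k$, $n_x\le p\le d(x)$, $p_i=d(x)_i$; $\Lambda^{\le\infty}$ is the set of boundary paths. $\sigma^px(a,b)=x(a+p,b+p)$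 ($p\le d(x)$); $\lambda x$ is the concatenation of $\lambda$ (with $s(\lambda)=x(0)$) and $x$, a graph morphism on $\Omega_{k,d(\lambda)+d(x)}$. $V_\Lambda=\{(x;m):x\in\Lambda^{\le\infty},m\in\mathbb{N}^k,m\not\le d(x)\}$, $(x;m)\approx(y;p)$ iff $x(m\wedge d(x))=y(p\wedge d(y))$ and $m-m\wedge d(x)=p-p\wedge d(y)$; classes $[x;m]$ form $\widetilde{V_\Lambda}$. $P_\Lambda=\{(x;(m,n)):x\in\Lambda^{\le\infty},m\le n\in\mathbb{N}^k,n\not\le d(x)\}$, $(x;(m,n))\sim(y;(p,q))$ iff $x(m\wedge d(x),n\wedge d(x))=y(p\wedge d(y),q\wedge d(y))$, $m-m\wedge d(x)=p-p\wedge d(y)$, $n-m=q-p$; classes $[x;(m,n)]$ form $\widetilde{P_\Lambda}$. The extension $\overline{\Lambda}$ has objects $\Lambda^0\sqcup\widetilde{V_\Lambda}$ and morphisms $\Lambda\sqcup\widetilde{P_\Lambda}$: on $\Lambda$ everything is as in $\Lambda$; $\overline r([x;(m,n)])=x(m)$ if $m\le d(x)$, else $[x;m]$; $\overline s([x;(m,n)])=[x;n]$; identity at $[x;m]$ is $[x;(m,m)]$; $\lambda[x;(m,n)]=[\lambda\sigma^mx;(0,d(\lambda)+n-m)]$ when $s(\lambda)=\overline r([x;(m,n)])$; $[x;(m,n)][y;(p,q)]=[z;(m,n+q-p)]$ with $z=x(0,n\wedge d(x))\sigma^{p\wedge d(y)}y$ when $\overline s([x;(m,n)])=\overline r([y;(p,q)])$.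 The degree is $\overline d|_\Lambda=d$, $\overline d([x;(m,n)])=n-m$. *)

From HB Require Import structures.
From mathcomp Require Import all_boot.
From Stdlib Require Import ClassicalEpsilon ClassicalDescription.

Set Implicit Arguments.
Unset Strict Implicit.
Unset Printing Implicit Defensive.

Definition Nk (k : nat) := {ffun 'I_k -> nat}.
Definition zerok k : Nk k := [ffun _ => 0].
Definition addk k (m n : Nk k) : Nk k := [ffun i => m i + n i].
Definition subk k (m n : Nk k) : Nk k := [ffun i => m i - n i].
Definition lek k (m n : Nk k) : bool := [forall i, m i <= n i].
Definition ek k (i : 'I_k) : Nk k := [ffun j => nat_of_bool (j == i)].

(* None stands for oo *)
Definition NInf (k : nat) := {ffun 'I_k -> option nat}.
Definition leI k (p : Nk k) (m : NInf k) : bool :=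
  [forall i, if m i is Some a then p i <= a else true].
Definition meetI k (p : Nk k) (m : NInf k) : Nk k :=
  [ffun i => if m i is Some a then minn (p i) a else p i].
Definition addNI k (p : Nk k) (m : NInf k) : NInf k :=
  [ffun i => omap (fun a => p i + a) (m i)].
Definition subIN k (m : NInf k) (p : Nk k) : NInf k :=
  [ffun i => omap (fun a => a - p i) (m i)].

Record kgraph_data (k : nat) := KGraphData {
  Obj : Type;
  Mor : Type;
  rg : Mor -> Obj;
  sc : Mor -> Obj;
  idm : Obj -> Mor;
  comp : Mor -> Mor -> Mor;
  deg : Mor -> Nk k }.

Record is_kgraph k (G : kgraph_data k) : Prop := {
  kg_countable : exists f : Mor G -> nat, injective f;
  kg_rg_idm : forall v : Obj G, rg (idm v) = v;
  kg_sc_idm : forall v : Obj G, sc (idm v) = v;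
  kg_rg_comp : forall f g : Mor G, sc f = rg g -> rg (comp f g) = rg f;
  kg_sc_comp : forall f g : Mor G, sc f = rg g -> sc (comp f g) = sc g;
  kg_idl : forall f : Mor G, comp (idm (rg f)) f = f;
  kg_idr : forall f : Mor G, comp f (idm (sc f)) = f;
  kg_assoc : forall f g h : Mor G, sc f = rg g -> sc g = rg h ->
      comp (comp f g) h = comp f (comp g h);
  kg_deg_idm : forall v : Obj G, deg (idm v) = zerok k;
  kg_deg_comp : forall f g : Mor G, sc f = rg g ->
      deg (comp f g) = addk (deg f) (deg g);
  kg_fact : forall (l : Mor G) (m n : Nk k), deg l = addk m n ->
      exists! p : Mor G * Mor G,
        sc p.1 = rg p.2 /\ comp p.1 p.2 = l /\ deg p.1 = m /\ deg p.2 = n }.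

Definition no_sources k (G : kgraph_data k) : Prop :=
  forall (v : Obj G) (n : Nk k), exists l : Mor G, rg l = v /\ deg l = n.

(* ---------- graph morphisms Omega_{k,m} -> Lambda ---------- *)
(* x(p,q) is pmap x p q (only meaningful for p <= q <= pdeg x);
   the vertex x(p) is the range of the identity x(p,p). *)
Record kpath k (G : kgraph_data k) := KPath {
  pdeg : NInf k;
  pmap : Nk k -> Nk k -> Mor G }.

Section Paths.
Variables (k : nat) (G : kgraph_data k).

Definition vert (x : kpath G) (p : Nk k) : Obj G := rg (pmap x p p).

Definition graph_morphism (x : kpath G) : Prop :=
  (forall p, leI p (pdeg x) -> pmap x p p = idm (vert x p)) /\
  (forall p q, lek p q -> leI q (pdeg x) ->
      rg (pmap x p q) = vert x p /\ sc (pmap x p q) = vert x q) /\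
  (forall p q, lek p q -> leI q (pdeg x) -> deg (pmap x p q) = subk q p) /\
  (forall p q t, lek p q -> lek q t -> leI t (pdeg x) ->
      comp (pmap x p q) (pmap x q t) = pmap x p t).

Definition boundary_path (x : kpath G) : Prop :=
  graph_morphism x /\
  exists nx : Nk k, leI nx (pdeg x) /\
    forall p : Nk k, lek nx p -> leI p (pdeg x) ->
      forall i : 'I_k, pdeg x i = Some (p i) ->
        forall l : Mor G, rg l = vert x p -> deg l <> ek i.

Definition shift (x : kpath G) (p : Nk k) : kpath G :=
  KPath (subIN (pdeg x) p) (fun a b => pmap x (addk a p) (addk b p)).

Definition is_concat (lam : Mor G) (x : kpath G) (z : kpath G) : Prop :=
  pdeg z = addNI (deg lam) (pdeg x) /\ graph_morphism z /\
  pmap z (zerok k) (deg lam) = lam /\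
  forall q, leI q (pdeg x) ->
    pmap z (deg lam) (addk (deg lam) q) = pmap x (zerok k) q.

Definition concat (lam : Mor G) (x : kpath G) : kpath G :=
  epsilon (inhabits (KPath (pdeg x) (fun _ _ => lam))) (is_concat lam x).

Definition validV (a : kpath G * Nk k) : Prop :=
  boundary_path a.1 /\ ~~ leI a.2 (pdeg a.1).

Definition approxV (a b : kpath G * Nk k) : Prop :=
  vert a.1 (meetI a.2 (pdeg a.1)) = vert b.1 (meetI b.2 (pdeg b.1)) /\
  subk a.2 (meetI a.2 (pdeg a.1)) = subk b.2 (meetI b.2 (pdeg b.1)).

Definition classV (a : kpath G * Nk k) : kpath G * Nk k -> Prop :=
  fun b => validV b /\ approxV a b.

Definition Vt : Type :=
  {C : kpath G * Nk k -> Prop | exists a, validV a /\ C = classV a}.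

Definition validP (a : kpath G * (Nk k * Nk k)) : Prop :=
  boundary_path a.1 /\ lek a.2.1 a.2.2 /\ ~~ leI a.2.2 (pdeg a.1).

Definition simP (a b : kpath G * (Nk k * Nk k)) : Prop :=
  let: (x, (m, n)) := a in let: (y, (p, q)) := b in
  pmap x (meetI m (pdeg x)) (meetI n (pdeg x))
    = pmap y (meetI p (pdeg y)) (meetI q (pdeg y)) /\
  subk m (meetI m (pdeg x)) = subk p (meetI p (pdeg y)) /\
  subk n m = subk q p.

Definition classP (a : kpath G * (Nk k * Nk k)) : kpath G * (Nk k * Nk k) -> Prop :=
  fun b => validP b /\ simP a b.

Definition Pt : Type :=
  {C : kpath G * (Nk k * Nk k) -> Prop | exists a, validP a /\ C = classP a}.

Definition repV (c : Vt) : kpath G * Nk k :=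
  proj1_sig (constructive_indefinite_description _ (proj2_sig c)).
Definition repP (c : Pt) : kpath G * (Nk k * Nk k) :=
  proj1_sig (constructive_indefinite_description _ (proj2_sig c)).

Definition ObjE : Type := (Obj G + Vt)%type.
Definition MorE : Type := (Mor G + Pt)%type.

(* [a] (with a junk default if a is not a valid representative) *)
Definition mkV (a : kpath G * Nk k) (dflt : ObjE) : ObjE :=
  match excluded_middle_informative (validV a) with
  | left h => inr (exist (fun C => exists a0, validV a0 /\ C = classV a0)
                         (classV a) (ex_intro _ a (conj h erefl)))
  | right _ => dflt
  end.

Definition mkP (a : kpath G * (Nk k * Nk k)) (dflt : MorE) : MorE :=
  match excluded_middle_informative (validP a) with
  | left h => inr (exist (fun C => exists a0, validP a0 /\ C = classP a0)
                         (classP a) (ex_intro _ a (conj h erefl)))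
  | right _ => dflt
  end.

Definition rgE (f : MorE) : ObjE :=
  match f with
  | inl l => inl (rg l)
  | inr P => let: (x, (m, n)) := repP P in
             if leI m (pdeg x) then inl (vert x m) else mkV (x, m) (inl (vert x m))
  end.

Definition scE (f : MorE) : ObjE :=
  match f with
  | inl l => inl (sc l)
  | inr P => let: (x, (m, n)) := repP P in mkV (x, n) (inl (vert x n))
  end.

Definition idmE (o : ObjE) : MorE :=
  match o with
  | inl v => inl (idm v)
  | inr c => let: (x, m) := repV c in mkP (x, (m, m)) (inl (pmap x m m))
  end.

Definition degE (f : MorE) : Nk k :=
  match f with
  | inl l => deg l
  | inr P => let: (x, (m, n)) := repP P in subk n m
  end.

Definition compE (f g : MorE) : MorE :=
  match f, g with
  | inl l, inl mu => inl (comp l mu)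
  | inl l, inr P =>
      let: (x, (m, n)) := repP P in
      mkP (concat l (shift x m), (zerok k, addk (deg l) (subk n m))) (inl l)
  | inr P, inl _ => inr P  (* never composable *)
  | inr P, inr Q =>
      let: (x, (m, n)) := repP P in
      let: (y, (p, q)) := repP Q in
      mkP (concat (pmap x (zerok k) (meetI n (pdeg x))) (shift y (meetI p (pdeg y))),
           (m, subk (addk n q) p)) (inr P)
  end.

End Paths.

Definition kext k (G : kgraph_data k) : kgraph_data k :=
  @KGraphData k (ObjE G) (MorE G) (@rgE k G) (@scE k G) (@idmE k G)
    (@compE k G) (@degE k G).

(* A morphism [[x;(m,n)]] of the extension is determined by three
   coordinates: the segment [x(m /\ d(x), n /\ d(x))] of [Lambda], the excess
   [m - m /\ d(x)] of its range beyond the end of [x], and its degree [n - m].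
   In these coordinates range, source, identities and composition are
   explicit (composition composes the segments and adds the degrees), so the
   category axioms and unique factorization reduce to those of [Lambda] and
   arithmetic in [N^k].  There are no sources: from any vertex [v], extending
   greedily by edges of each colour in turn yields a boundary path [x] with
   [x(0) = v], and then [x(0, n)] or [[x;(0, n)]] has range [v] and degree
   [n]; from a new vertex [[x;m]] one takes [[x;(m, m + n)]]. *)

From Pilot Require Import Defs.
From mathcomp Require Import all_boot zify.
From Stdlib Require Import ClassicalEpsilon ClassicalDescription Classical.
From Stdlib Require Import FunctionalExtensionality PropExtensionality ProofIrrelevance.

Set Implicit Arguments.
Unset Strict Implicit.
Unset Printing Implicit Defensive.

Local Notation cmp := Defs.comp.
Local Notation pmap := Defs.pmap.


Section NkArith.
Variable k : nat.
Implicit Types (m n p q : Nk k) (d : NInf k).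

Lemma addkE m n i : addk m n i = m i + n i. Proof. by rewrite ffunE. Qed.
Lemma subkE m n i : subk m n i = m i - n i. Proof. by rewrite ffunE. Qed.
Lemma zerokE i : zerok k i = 0. Proof. by rewrite ffunE. Qed.
Lemma ekE (j i : 'I_k) : ek j i = (i == j). Proof. by rewrite ffunE. Qed.
Lemma meetIE p d i : meetI p d i = if d i is Some a then minn (p i) a else p i.
Proof. by rewrite ffunE. Qed.
Lemma addNIE p d i : addNI p d i = omap (fun a => p i + a) (d i).
Proof. by rewrite ffunE. Qed.
Lemma subINE d p i : subIN d p i = omap (fun a => a - p i) (d i).
Proof. by rewrite ffunE. Qed.

Lemma eq_Nk m n : (forall i, m i = n i) -> m = n.
Proof. by move=> H; apply/ffunP. Qed.

Lemma lekP m n : reflect (forall i, m i <= n i) (lek m n).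
Proof. exact: forallP. Qed.

Lemma leIP p d : reflect (forall i a, d i = Some a -> p i <= a) (leI p d).
Proof.
apply: (iffP forallP) => H i; first by move=> a E; move: (H i); rewrite E.
by case E: (d i) => [a|] //; apply: H.
Qed.

Lemma lek_at m n i : lek m n -> m i <= n i.
Proof. by move/lekP. Qed.

Lemma leI_at p d i : leI p d -> if d i is Some a then p i <= a else true.
Proof. by move/leIP => H; case E: (d i) => [a|] //; apply: H. Qed.

End NkArith.

Ltac nkE := rewrite ?(addkE, subkE, zerokE, ekE, meetIE, addNIE, subINE).

Ltac nk_lia := apply: eq_Nk => ?; nkE; lia.

Section NkOrder.
Variable k : nat.
Implicit Types (m n p q : Nk k) (d : NInf k).

Lemma lek_refl m : lek m m. Proof. by apply/lekP. Qed.

Lemma lek_trans m n p : lek m n -> lek n p -> lek m p.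
Proof. move=> /lekP H1 /lekP H2; apply/lekP => i; move: (H1 i) (H2 i); lia. Qed.

Lemma le0k m : lek (zerok k) m. Proof. by apply/lekP => i; nkE. Qed.

Lemma lek_addr m n : lek m (addk m n).
Proof. by apply/lekP => i; nkE; lia. Qed.

Lemma lek_leI_trans m n d : lek m n -> leI n d -> leI m d.
Proof. move=> /lekP H1 /leIP H2; apply/leIP => i a E; move: (H1 i) (H2 i a E); lia. Qed.

Lemma leI0 d : leI (zerok k) d.
Proof. by apply/leIP => ???; nkE. Qed.

Lemma leIPn p d : ~~ leI p d -> exists i c, d i = Some c /\ c < p i.
Proof.
move=> H; apply: NNPP => H'; move/negP: H; apply; apply/leIP => i a E.
by case: (leqP (p i) a) => // Hl; exfalso; apply: H'; exists i, a.
Qed.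

Lemma leI_addk_subIN q p d : leI p d -> leI q (subIN d p) -> leI (addk q p) d.
Proof.
move=> /leIP H1 /leIP H2; apply/leIP => i a E; nkE.
by move: (H1 i a E) (H2 i (a - p i)); rewrite subINE E /= => ? /(_ erefl); lia.
Qed.

Lemma leI_addNI n q d : leI q d -> leI (addk n q) (addNI n d).
Proof.
move/leIP=> H; apply/leIP => i a; rewrite addNIE; case E: (d i) => [b|] //= [<-].
by move: (H i b E); nkE; lia.
Qed.

Lemma meetI_leI m d : leI (meetI m d) d.
Proof. by apply/leIP => i a E; rewrite meetIE E; lia. Qed.

Lemma meetI_mono m n d : lek m n -> lek (meetI m d) (meetI n d).
Proof.
move/lekP=> H; apply/lekP => i; rewrite !meetIE.
by move: (H i); case: (d i) => *; lia.
Qed.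

Lemma meetI_id m d : leI m d -> meetI m d = m.
Proof.
move/leIP=> H; apply: eq_Nk => i; rewrite meetIE.
by case E: (d i) => [a|] //; move: (H i a E); lia.
Qed.

Lemma meetI0 d : meetI (zerok k) d = zerok k.
Proof. by apply: meetI_id; apply: leI0. Qed.

Lemma subk_meetI_eq0 m d : (subk m (meetI m d) == zerok k) = leI m d.
Proof.
apply/eqP/idP => [H|H]; last by rewrite meetI_id //; nk_lia.
apply/leIP => i a E; move: (congr1 (fun f : Nk k => f i) H).
by rewrite subkE zerokE meetIE E; lia.
Qed.

Definition mink m n : Nk k := [ffun i => minn (m i) (n i)].
Lemma minkE m n i : mink m n i = minn (m i) (n i). Proof. by rewrite ffunE. Qed.

End NkOrder.

Section Factorization.
Variables (k : nat) (G : kgraph_data k) (HG : is_kgraph G).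
Implicit Types (l u w : Mor G) (a : Nk k).

Definition factorization l a (p : Mor G * Mor G) : Prop :=
  sc p.1 = rg p.2 /\ cmp p.1 p.2 = l /\ deg p.1 = a /\ deg p.2 = subk (deg l) a.

(* [seg_to l a] and [seg_from l a] are the paper's [l(0, a)] and
   [l(a, d(l))]; they are junk unless [a <= d(l)]. *)
Definition factor l a : Mor G * Mor G := epsilon (inhabits (l, l)) (factorization l a).
Definition seg_to l a := (factor l a).1.
Definition seg_from l a := (factor l a).2.

Lemma factorP l a : lek a (deg l) -> factorization l a (seg_to l a, seg_from l a).
Proof.
move=> /lekP H; rewrite /seg_to /seg_from -surjective_pairing.
have E : deg l = addk a (subk (deg l) a) by apply: eq_Nk => i; nkE; move: (H i); lia.
have [p [Hp _]] := kg_fact HG E.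
exact: epsilon_spec (ex_intro _ p Hp).
Qed.

Section Factor.
Variables (l : Mor G) (a : Nk k).
Hypothesis Ha : lek a (deg l).

Lemma sc_seg_to : sc (seg_to l a) = rg (seg_from l a).
Proof. by case: (factorP Ha). Qed.
Lemma comp_seg_to_from : cmp (seg_to l a) (seg_from l a) = l.
Proof. by case: (factorP Ha) => _ []. Qed.
Lemma deg_seg_to : deg (seg_to l a) = a.
Proof. by case: (factorP Ha) => _ [_ []]. Qed.
Lemma deg_seg_from : deg (seg_from l a) = subk (deg l) a.
Proof. by case: (factorP Ha) => _ [_ []]. Qed.
Lemma rg_seg_to : rg (seg_to l a) = rg l.
Proof. by rewrite -{2}comp_seg_to_from (kg_rg_comp HG sc_seg_to). Qed.
Lemma sc_seg_from : sc (seg_from l a) = sc l.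
Proof. by rewrite -{2}comp_seg_to_from (kg_sc_comp HG sc_seg_to). Qed.

End Factor.

Lemma factor_unique l u w : sc u = rg w -> cmp u w = l ->
  u = seg_to l (deg u) /\ w = seg_from l (deg u).
Proof.
move=> Hs Hc.
have Hd : deg l = addk (deg u) (deg w) by rewrite -Hc (kg_deg_comp HG Hs).
have Hle : lek (deg u) (deg l) by rewrite Hd; apply: lek_addr.
have [S1 [S2 [S3 S4]]] := factorP Hle.
have S4' : deg (seg_from l (deg u)) = deg w by rewrite S4 Hd; nk_lia.
have [p [_ Hu]] := kg_fact HG Hd.
have := Hu _ (conj S1 (conj S2 (conj S3 S4'))).
by rewrite (Hu (u, w) (conj Hs (conj Hc (conj erefl erefl)))) => -[<- <-].
Qed.

Lemma comp_cancel u w u' w' : sc u = rg w -> sc u' = rg w' -> cmp u w = cmp u' w' ->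
  deg u = deg u' -> u = u' /\ w = w'.
Proof.
move=> H1 H2 Hc Hd.
have [E1 E2] := factor_unique H1 erefl; have [E1' E2'] := factor_unique H2 erefl.
by split; [rewrite E1 E1' Hc Hd | rewrite E2 E2' Hc Hd].
Qed.

Lemma deg0_idm l : deg l = zerok k -> l = idm (rg l).
Proof.
move=> H.
have H1 : sc (idm (rg l)) = rg l by rewrite (kg_sc_idm HG).
have H2 : sc l = rg (idm (sc l)) by rewrite (kg_rg_idm HG).
have := comp_cancel H1 H2 _ _.
by rewrite (kg_idl HG) (kg_idr HG) (kg_deg_idm HG) H => /(_ erefl erefl) [].
Qed.

Lemma seg_to_comp u w a : sc u = rg w -> lek a (deg u) -> seg_to (cmp u w) a = seg_to u a.
Proof.
move=> Hs Ha; have [S1 [S2 [S3 _]]] := factorP Ha.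
have Ssuf : sc (seg_from u a) = rg w by rewrite sc_seg_from.
have Hs' : sc (seg_to u a) = rg (cmp (seg_from u a) w) by rewrite (kg_rg_comp HG Ssuf).
have := factor_unique Hs' erefl; rewrite -(kg_assoc HG S1 Ssuf) S2 S3.
by case=> <-.
Qed.

Lemma seg_from_comp u w : sc u = rg w -> seg_from (cmp u w) (deg u) = w.
Proof. by move=> Hs; case: (factor_unique Hs erefl). Qed.

Lemma seg_to_deg l : seg_to l (deg l) = l.
Proof.
have H : sc l = rg (idm (sc l)) by rewrite (kg_rg_idm HG).
by case: (factor_unique H erefl); rewrite (kg_idr HG).
Qed.

Lemma seg_from0 l : seg_from l (zerok k) = l.
Proof.
have H : sc (idm (rg l)) = rg l by rewrite (kg_sc_idm HG).
by have := seg_from_comp H; rewrite (kg_idl HG) (kg_deg_idm HG).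
Qed.

Lemma seg_to_seg_to l a b : lek a b -> lek b (deg l) -> seg_to (seg_to l b) a = seg_to l a.
Proof.
move=> H1 H2; rewrite -{2}(comp_seg_to_from H2) (seg_to_comp (sc_seg_to H2)) //.
by rewrite deg_seg_to.
Qed.

(* Factor [l f] as [f' l'] with [d(f') = d(f)]. *)
Lemma path_at_rg_of_comp l f : sc l = rg f -> exists f', rg f' = rg l /\ deg f' = deg f.
Proof.
move=> Hs.
have E : deg (cmp l f) = addk (deg f) (deg l) by rewrite (kg_deg_comp HG Hs); nk_lia.
have [[a b] [[H1 [H2 [H3 _]]] _]] := kg_fact HG E.
by exists a; rewrite -(kg_rg_comp HG H1) H2 (kg_rg_comp HG Hs).
Qed.

End Factorization.

Section GraphMorphisms.
Variables (k : nat) (G : kgraph_data k) (HG : is_kgraph G).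

Section GraphMorphismFacts.
Variable x : kpath G.
Hypothesis Hx : graph_morphism x.
Local Notation d := (pdeg x).

Lemma gm_id p : leI p d -> pmap x p p = idm (vert x p).
Proof. by case: Hx => H _; apply: H. Qed.
Lemma gm_rg p q : lek p q -> leI q d -> rg (pmap x p q) = vert x p.
Proof. by case: Hx => _ [H _] ??; case: (H p q). Qed.
Lemma gm_sc p q : lek p q -> leI q d -> sc (pmap x p q) = vert x q.
Proof. by case: Hx => _ [H _] ??; case: (H p q). Qed.
Lemma gm_deg p q : lek p q -> leI q d -> deg (pmap x p q) = subk q p.
Proof. by case: Hx => _ [_ [H _]]; apply: H. Qed.
Lemma gm_comp p q t : lek p q -> lek q t -> leI t d ->
  cmp (pmap x p q) (pmap x q t) = pmap x p t.
Proof. by case: Hx => _ [_ [_ H]]; apply: H. Qed.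
Lemma gm_sc_rg p q t : lek p q -> lek q t -> leI t d -> sc (pmap x p q) = rg (pmap x q t).
Proof. by move=> Hpq Hqt Ht; rewrite gm_sc ?gm_rg //; apply: lek_leI_trans Ht. Qed.

Lemma gm_seg_from p q : lek p q -> leI q d -> pmap x p q = seg_from (pmap x (zerok k) q) p.
Proof.
move=> H Hq; have H0 := le0k p.
have := factor_unique HG (gm_sc_rg H0 H Hq) (gm_comp H0 H Hq).
rewrite gm_deg ?(lek_leI_trans H) //; case=> _ ->; congr seg_from; nk_lia.
Qed.

Lemma gm_split p t u : lek p t -> lek t u -> leI u d ->
  pmap x p t = seg_to (pmap x p u) (subk t p) /\
  pmap x t u = seg_from (pmap x p u) (subk t p).
Proof.
move=> Hpt Htu Hu; have Ht := lek_leI_trans Htu Hu.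
have := factor_unique HG (gm_sc_rg Hpt Htu Hu) (gm_comp Hpt Htu Hu).
by rewrite gm_deg.
Qed.

End GraphMorphismFacts.

Section CoherentFamily.
Variables (d : NInf k) (W : Nk k -> Mor G).
Hypothesis W_deg : forall q, leI q d -> lek q (deg (W q)).
Hypothesis W_coherent :
  forall q q', lek q q' -> leI q' d -> seg_to (W q') q = seg_to (W q) q.

Definition initial_segment q := seg_to (W q) q.

Definition path_of_family : kpath G :=
  KPath d (fun a b => seg_from (initial_segment b) a).

Local Notation Z := initial_segment.

Lemma initial_segment_deg q : leI q d -> deg (Z q) = q.
Proof. by move=> H; rewrite (deg_seg_to HG) //; apply: W_deg. Qed.

Lemma seg_to_initial_segment q q' : lek q q' -> leI q' d -> seg_to (Z q') q = Z q.
Proof.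
by move=> H H'; rewrite /initial_segment (seg_to_seg_to HG) ?W_coherent ?W_deg.
Qed.

Lemma lek_initial_segment q q' : lek q q' -> leI q' d -> lek q (deg (Z q')).
Proof. by move=> H H'; rewrite initial_segment_deg. Qed.

Lemma sc_initial_segment q q' : lek q q' -> leI q' d -> sc (Z q) = rg (seg_from (Z q') q).
Proof.
by move=> H H'; rewrite -(sc_seg_to HG (lek_initial_segment H H')) seg_to_initial_segment.
Qed.

Lemma comp_initial_segment q q' : lek q q' -> leI q' d ->
  cmp (Z q) (seg_from (Z q') q) = Z q'.
Proof.
move=> H H'; rewrite -{1}(seg_to_initial_segment H H') (comp_seg_to_from HG) //.
exact: lek_initial_segment.
Qed.

Lemma vert_path_of_family p : leI p d -> vert path_of_family p = sc (Z p).
Proof. by move=> Hp; rewrite (sc_initial_segment (lek_refl p) Hp). Qed.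

Lemma path_of_family_gm : graph_morphism path_of_family.
Proof.
split; [|split; [|split]] => /=.
- move=> p Hp; have Hle := lek_initial_segment (lek_refl p) Hp.
  rewrite {1}(deg0_idm HG (l := seg_from (Z p) p)) // (deg_seg_from HG) //.
  by rewrite initial_segment_deg //; nk_lia.
- move=> p q Hpq Hq; have Hp := lek_leI_trans Hpq Hq.
  rewrite !vert_path_of_family // (sc_initial_segment Hpq Hq) (sc_seg_from HG) //.
  exact: lek_initial_segment.
- move=> p q Hpq Hq.
  by rewrite (deg_seg_from HG) ?initial_segment_deg //; apply: lek_initial_segment.
- move=> p q t Hpq Hqt Ht.
  have Hq := lek_leI_trans Hqt Ht; have Hpt := lek_trans Hpq Hqt.
  have Sqt := sc_initial_segment Hqt Ht; have Spq := sc_initial_segment Hpq Hq.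
  have Spqt : sc (seg_from (Z q) p) = rg (seg_from (Z t) q).
    by rewrite (sc_seg_from HG) ?Sqt //; apply: lek_initial_segment.
  have Sp : sc (Z p) = rg (cmp (seg_from (Z q) p) (seg_from (Z t) q)).
    by rewrite (kg_rg_comp HG Spqt).
  have := comp_cancel HG Sp (sc_initial_segment Hpt Ht) _ erefl.
  rewrite -(kg_assoc HG Spq Spqt) !comp_initial_segment //.
  by move=> /(_ erefl) [].
Qed.

End CoherentFamily.

Lemma gm_shift (x : kpath G) p : graph_morphism x -> leI p (pdeg x) ->
  graph_morphism (shift x p).
Proof.
move=> Hx Hp.
have Ha a b : lek a b -> lek (addk a p) (addk b p).
  by move=> /lekP H; apply/lekP => i; nkE; move: (H i); lia.
have HI q : leI q (subIN (pdeg x) p) -> leI (addk q p) (pdeg x) by apply: leI_addk_subIN.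
split; [|split; [|split]] => /=.
- by move=> q Hq; rewrite gm_id ?HI.
- by move=> a b Hab Hb; rewrite /vert /= gm_rg ?gm_sc ?Ha ?HI ?lek_refl.
- by move=> a b Hab Hb; rewrite gm_deg ?Ha ?HI //; nk_lia.
- by move=> a b c Hab Hbc Hc; rewrite gm_comp ?Ha ?HI.
Qed.

Lemma vert_shift (x : kpath G) p q : vert (shift x p) q = vert x (addk q p).
Proof. by []. Qed.

Lemma boundary_shift (x : kpath G) p : boundary_path x -> leI p (pdeg x) ->
  boundary_path (shift x p).
Proof.
move=> [Hx [nx [Hn Hb]]] Hp; split; first exact: gm_shift.
exists (subk nx p); split.
  apply/leIP => i a; rewrite subINE; case E: (pdeg x i) => [b|] //= [<-].
  by move/leIP: Hn => /(_ i b E); nkE; lia.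
move=> q Hq Hq' i Ei l Hl; apply: (Hb (addk q p)) Hl.
- by move/lekP: Hq => H; apply/lekP => j; move: (H j); nkE; lia.
- exact: leI_addk_subIN.
- move: Ei; rewrite /= subINE addkE; case E: (pdeg x i) => [b|] //= [<-].
  by move/leIP: Hp => /(_ i b E) ?; congr Some; lia.
Qed.

Section Concatenation.
Variables (lam : Mor G) (x : kpath G).
Hypothesis Hx : graph_morphism x.
Hypothesis Hlam : sc lam = vert x (zerok k).
Local Notation dl := (deg lam).
Local Notation dz := (addNI dl (pdeg x)).

(* For [q >= d(lam)], [(lam x)(0, q) = lam x(0, q - d(lam))]; every other
   initial segment of [lam x] is an initial segment of one of these. *)
Definition concat_segment q := cmp lam (pmap x (zerok k) (subk q dl)).

Lemma leI_concat_sub q : leI q dz -> leI (subk q dl) (pdeg x).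
Proof.
move/leIP=> H; apply/leIP => i a E; move: (H i (dl i + a)).
by rewrite addNIE E /= subkE => /(_ erefl); lia.
Qed.

Lemma sc_concat q : leI q dz -> sc lam = rg (pmap x (zerok k) (subk q dl)).
Proof. by move=> H; rewrite gm_rg ?le0k ?leI_concat_sub. Qed.

Lemma deg_concat_segment q : leI q dz -> deg (concat_segment q) = addk dl (subk q dl).
Proof.
move=> H; rewrite /concat_segment (kg_deg_comp HG (sc_concat H)).
by rewrite gm_deg ?le0k ?leI_concat_sub //; congr addk; nk_lia.
Qed.

Lemma is_concat_exists : exists z, is_concat lam x z.
Proof.
have K1 q : leI q dz -> lek q (deg (concat_segment q)).
  by move=> H; rewrite deg_concat_segment //; apply/lekP => i; nkE; lia.
have K2 q q' : lek q q' -> leI q' dz ->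
    seg_to (concat_segment q') q = seg_to (concat_segment q) q.
  move=> Hqq Hq'; have Hq := lek_leI_trans Hqq Hq'.
  have Hs : lek (subk q dl) (subk q' dl).
    by move/lekP: Hqq => H; apply/lekP => i; nkE; move: (H i); lia.
  rewrite /concat_segment -(gm_comp Hx (le0k _) Hs (leI_concat_sub Hq')).
  have S1 := sc_concat Hq; have S2 := gm_sc_rg Hx (le0k _) Hs (leI_concat_sub Hq').
  rewrite -(kg_assoc HG S1 S2) (seg_to_comp HG) ?(kg_sc_comp HG S1) //.
  exact: K1.
exists (path_of_family dz concat_segment); split=> //; split.
  exact: path_of_family_gm.
have E0 q : subk (addk dl q) dl = q by nk_lia.
split=> /=.
- rewrite (seg_from0 HG) /initial_segment /concat_segment.
  have -> : subk dl dl = zerok k by nk_lia.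
  by rewrite gm_id ?leI0 // -Hlam (kg_idr HG) (seg_to_deg HG).
- move=> q Hq; have Hq' : leI (addk dl q) dz by apply: leI_addNI.
  rewrite /initial_segment.
  have -> : seg_to (concat_segment (addk dl q)) (addk dl q) = concat_segment (addk dl q).
    by rewrite -{2}(seg_to_deg HG (concat_segment _)) deg_concat_segment // E0.
  by rewrite /concat_segment E0 (seg_from_comp HG) //; move: (sc_concat Hq'); rewrite E0.
Qed.

Lemma concatP : is_concat lam x (concat lam x).
Proof.
have [z Hz] := is_concat_exists.
exact: epsilon_spec (ex_intro _ z Hz).
Qed.

End Concatenation.

Lemma concat_pmap (lam : Mor G) (x z : kpath G) a t : is_concat lam x z ->
  lek a (deg lam) -> leI t (pdeg x) ->
  pmap z a (addk (deg lam) t) = cmp (seg_from lam a) (pmap x (zerok k) t).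
Proof.
move=> [Ed [Hz [E0 E1]]] Ha Ht.
have Hq : leI (addk (deg lam) t) (pdeg z) by rewrite Ed; apply: leI_addNI.
rewrite -(gm_comp Hz Ha (lek_addr _ _) Hq) E1 //; congr cmp.
by rewrite (gm_seg_from Hz Ha) ?E0 //; apply: lek_leI_trans Hq; apply: lek_addr.
Qed.

Lemma boundary_concat (lam : Mor G) (x z : kpath G) : is_concat lam x z ->
  boundary_path x -> boundary_path z.
Proof.
move=> Hc [Hx [nx [Hn Hb]]]; have [Ed [Hz [E0 E1]]] := Hc.
split=> //; exists (addk (deg lam) nx); split; first by rewrite Ed; apply: leI_addNI.
move=> p Hp Hp' i Ei l Hl.
set p' := subk p (deg lam).
have Ep : p = addk (deg lam) p'.
  by move/lekP: Hp => H; apply: eq_Nk => j; move: (H j); nkE; lia.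
have Hp1 : leI p' (pdeg x).
  move/leIP: Hp' => H; apply/leIP => j a E; move: (H j (deg lam j + a)).
  by rewrite Ed addNIE E /= => /(_ erefl); rewrite /p' subkE; lia.
apply: (Hb p' _ Hp1 i _ l).
- by move/lekP: Hp => H; apply/lekP => j; move: (H j); rewrite /p'; nkE; lia.
- move: Ei; rewrite Ed addNIE; case E: (pdeg x i) => [b|] //= [Eb].
  by congr Some; rewrite /p' subkE; lia.
- have Hz' : leI (addk (deg lam) p') (pdeg z) by rewrite Ed; apply: leI_addNI.
  by rewrite Hl Ep -(gm_sc Hz (lek_addr _ _) Hz') E1 ?gm_sc ?le0k.
Qed.

End GraphMorphisms.

Lemma bounded_nondecr_stable (a : nat -> nat) B : {homo a : j j' / j <= j'} ->
  (forall j, a j <= B) -> exists J, forall j, J <= j -> a j = a J.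
Proof.
move=> Ha Hle.
suff H n j : B - a j <= n -> exists J, forall j', J <= j' -> a j' = a J by exact: (H _ 0).
elim: n j => [|n IH] j Hj.
  by exists j => j' Hj'; move: (Hle j') (Ha _ _ Hj'); lia.
case: (classic (forall j', j <= j' -> a j' = a j)) => [|Hs]; first by exists j.
have [j' Hj'] : exists j', j <= j' /\ a j' <> a j.
  by apply: NNPP => Hn; apply: Hs => j' Hj'; apply: NNPP => Hne; apply: Hn; exists j'.
apply: (IH j'); case: Hj' => H1 H2; move: (Ha _ _ H1) (Hle j'); lia.
Qed.

Lemma nondecr_unstable_unbounded (a : nat -> nat) : {homo a : j j' / j <= j'} ->
  ~ (exists J, forall j, J <= j -> a j = a J) -> forall B, exists j, B < a j.
Proof.
move=> Ha Hn B; apply: NNPP => Hb; apply: Hn.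
apply: (bounded_nondecr_stable (B := B)) => // j.
by rewrite leqNgt; apply/negP => Hj; apply: Hb; exists j.
Qed.

(* Every colour is tried infinitely often, so in each direction
   where the degree stops growing the path ends at vertices with no edge of
   that colour: the limit is a boundary path. *)
Section GreedyBoundaryPath.
Variables (k : nat) (G : kgraph_data k) (HG : is_kgraph G) (v : Obj G).

Definition has_edge (u : Obj G) (i : 'I_k) := exists f : Mor G, rg f = u /\ deg f = ek i.

Definition greedy_step (l : Mor G) (j : nat) : Mor G :=
  match insub (j %% k) with
  | Some i => match excluded_middle_informative (has_edge (sc l) i) with
              | left H => cmp l (proj1_sig (constructive_indefinite_description _ H))
              | right _ => l end
  | None => l end.

Fixpoint greedy (j : nat) : Mor G :=
  if j is j'.+1 then greedy_step (greedy j') j' else idm v.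

Lemma greedy_succ j : exists r, [/\ sc (greedy j) = rg r, greedy j.+1 = cmp (greedy j) r &
  forall i, insub (j %% k) = Some i -> has_edge (sc (greedy j)) i -> deg r = ek i].
Proof.
have Hid : sc (greedy j) = rg (idm (sc (greedy j))) by rewrite (kg_rg_idm HG).
rewrite /= /greedy_step; case: insubP => [i _ Ei|_]; last first.
  by exists (idm (sc (greedy j))); rewrite (kg_idr HG).
case: excluded_middle_informative => [H|H].
  case: (constructive_indefinite_description _ H) => f [Hf1 Hf2] /=.
  by exists f; split=> // ? [<-].
by exists (idm (sc (greedy j))); rewrite (kg_idr HG); split=> // ? [<-].
Qed.

Lemma greedy_extends j j' : j <= j' ->
  exists r, sc (greedy j) = rg r /\ greedy j' = cmp (greedy j) r.
Proof.
move=> H; rewrite -(subnKC H); elim: (j' - j) => [|n [r [H1 H2]]].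
  by exists (idm (sc (greedy j))); rewrite addn0 (kg_rg_idm HG) (kg_idr HG).
have [r' [H3 H4 _]] := greedy_succ (j + n).
have H5 : sc r = rg r' by rewrite -(kg_sc_comp HG H1) -H2.
by exists (cmp r r'); rewrite addnS H4 H2 (kg_assoc HG) ?(kg_rg_comp HG).
Qed.

Lemma rg_greedy j : rg (greedy j) = v.
Proof.
have [r [H1 H2]] := greedy_extends (leq0n j).
by rewrite H2 (kg_rg_comp HG H1) /= (kg_rg_idm HG).
Qed.

Lemma greedy_deg_mono j j' : j <= j' -> lek (deg (greedy j)) (deg (greedy j')).
Proof.
move=> H; have [r [H1 H2]] := greedy_extends H.
by rewrite H2 (kg_deg_comp HG H1) lek_addr.
Qed.

Lemma seg_to_greedy j j' q : lek q (deg (greedy j)) -> lek q (deg (greedy j')) ->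
  seg_to (greedy j) q = seg_to (greedy j') q.
Proof.
wlog H : j j' / j <= j'.
  move=> W H1 H2; case: (leqP j j') => H; first exact: W.
  by symmetry; apply: W => //; apply: ltnW.
by move=> H1 H2; have [r [E1 ->]] := greedy_extends H; rewrite (seg_to_comp HG).
Qed.

Definition stable_at (i : 'I_k) J :=
  forall j, J <= j -> deg (greedy j) i = deg (greedy J) i.
Definition deg_stable (i : 'I_k) := exists J, stable_at i J.
Definition stable_from (i : 'I_k) := epsilon (inhabits 0) (stable_at i).

Definition greedy_deg : NInf k := [ffun i =>
  if excluded_middle_informative (deg_stable i) then Some (deg (greedy (stable_from i)) i)
  else None].

Lemma greedy_deg_Some i c : greedy_deg i = Some c ->
  (forall j, stable_from i <= j -> deg (greedy j) i = c) /\ forall j, deg (greedy j) i <= c.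
Proof.
rewrite ffunE; case: excluded_middle_informative => // Hs [<-].
have Hst : stable_at i (stable_from i) by exact: epsilon_spec.
split=> // j; case: (leqP (stable_from i) j) => Hj; first by rewrite Hst.
by apply/lek_at/greedy_deg_mono/ltnW.
Qed.

Lemma greedy_deg_None i : greedy_deg i = None -> forall B, exists j, B < deg (greedy j) i.
Proof.
rewrite ffunE; case: excluded_middle_informative => // Hs _.
by apply: nondecr_unstable_unbounded => // j j' H; apply/lek_at/greedy_deg_mono.
Qed.

Lemma leI_deg_greedy j : leI (deg (greedy j)) greedy_deg.
Proof. by apply/leIP => i c /greedy_deg_Some []. Qed.

Lemma leI_greedy_deg q : leI q greedy_deg -> exists j, lek q (deg (greedy j)).
Proof.
move/leIP=> H.
have Hi i : exists j, q i <= deg (greedy j) i.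
  case E: (greedy_deg i) => [c|].
    have [Hc _] := greedy_deg_Some E.
    by exists (stable_from i); rewrite Hc //; apply: H E.
  by have [j Hj] := greedy_deg_None E (q i); exists j; apply: ltnW.
pose jq i := epsilon (inhabits 0) (fun j => q i <= deg (greedy j) i).
exists (\max_i jq i); apply/lekP => i.
apply: (@leq_trans (deg (greedy (jq i)) i)); first exact: epsilon_spec (Hi i).
by apply/lek_at/greedy_deg_mono; apply: (@leq_bigmax _ jq).
Qed.

Definition greedy_index q := epsilon (inhabits 0) (fun j => lek q (deg (greedy j))).

Lemma greedy_index_deg q : leI q greedy_deg -> lek q (deg (greedy (greedy_index q))).
Proof. by move=> Hq; rewrite /greedy_index; apply: epsilon_spec (leI_greedy_deg Hq). Qed.

Definition greedy_path := path_of_family greedy_deg (fun q => greedy (greedy_index q)).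

Lemma greedy_index_coherent q q' : lek q q' -> leI q' greedy_deg ->
  seg_to (greedy (greedy_index q')) q = seg_to (greedy (greedy_index q)) q.
Proof.
move=> Hq Hq'; apply: seg_to_greedy; first exact: lek_trans Hq (greedy_index_deg Hq').
exact/greedy_index_deg/(lek_leI_trans Hq).
Qed.

Lemma greedy_path_gm : graph_morphism greedy_path.
Proof. exact: path_of_family_gm greedy_index_deg greedy_index_coherent. Qed.

Lemma vert_greedy_path0 : vert greedy_path (zerok k) = v.
Proof.
by rewrite /vert /= (seg_from0 HG) (rg_seg_to HG) ?rg_greedy ?greedy_index_deg ?leI0.
Qed.

Lemma vert_greedy_path j : vert greedy_path (deg (greedy j)) = sc (greedy j).
Proof.
have Hj := leI_deg_greedy j.
rewrite (vert_path_of_family HG greedy_index_deg greedy_index_coherent) //.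
rewrite /initial_segment (@seg_to_greedy _ j) ?lek_refl ?greedy_index_deg //.
by rewrite (seg_to_deg HG).
Qed.

Lemma greedy_no_edge i c j : greedy_deg i = Some c -> stable_from i <= j ->
  insub (j %% k) = Some i -> ~ has_edge (sc (greedy j)) i.
Proof.
move=> Ei Hj Hi Hedge; have [Hc _] := greedy_deg_Some Ei.
have [r [Hsc E1 E2]] := greedy_succ j.
have := Hc j.+1 (leqW Hj); rewrite E1 (kg_deg_comp HG Hsc) addkE (E2 i Hi Hedge) ekE eqxx.
by rewrite (Hc j Hj); lia.
Qed.

Lemma greedy_path_boundary : boundary_path greedy_path.
Proof.
split; first exact: greedy_path_gm.
pose J0 := \max_i stable_from i.
exists (deg (greedy (J0 * k + k))); split; first exact: leI_deg_greedy.
move=> p Hp Hp' i Ei l Hl Hdl.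
(* Step [J0 * k + i] tries colour [i] after its degree has stabilised, so it
   found no [i]-edge; but [l] yields one. *)
pose j := J0 * k + i.
have Hk : 0 < k by have := ltn_ord i; lia.
have HJ : stable_from i <= j.
  have := @leq_bigmax _ stable_from i; rewrite -/J0 /j => H.
  by have := leq_pmulr J0 Hk; lia.
have Hjp : lek (deg (greedy j)) p.
  by apply: lek_trans Hp; apply: greedy_deg_mono; rewrite /j; have := ltn_ord i; lia.
apply: (greedy_no_edge Ei HJ).
  by rewrite /j modnMDl modn_small ?ltn_ord // valK.
have Hs : sc (pmap greedy_path (deg (greedy j)) p) = rg l by rewrite (gm_sc greedy_path_gm).
have [f [Hf1 Hf2]] := path_at_rg_of_comp HG Hs.
by exists f; rewrite Hf1 Hf2 Hdl (gm_rg greedy_path_gm) // vert_greedy_path.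
Qed.

End GreedyBoundaryPath.

Section Coordinates.
Variables (k : nat) (G : kgraph_data k).

Definition Pcoord (a : kpath G * (Nk k * Nk k)) : Mor G * Nk k * Nk k :=
  let: (x, (m, n)) := a in
  (pmap x (meetI m (pdeg x)) (meetI n (pdeg x)), subk m (meetI m (pdeg x)), subk n m).

Definition Vcoord (a : kpath G * Nk k) : Obj G * Nk k :=
  let: (x, m) := a in (vert x (meetI m (pdeg x)), subk m (meetI m (pdeg x))).

Lemma simP_coord a b : simP a b <-> Pcoord a = Pcoord b.
Proof.
case: a => x [m n]; case: b => y [p q]; rewrite /simP /=.
by split=> [[-> [-> ->]] | [-> -> ->]].
Qed.

Lemma approxV_coord a b : approxV a b <-> Vcoord a = Vcoord b.
Proof.
case: a => x m; case: b => y p; rewrite /approxV /=.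
by split=> [[-> ->] | [-> ->]].
Qed.

Lemma repP_spec (P : Pt G) : validP (repP P) /\ sval P = classP (repP P).
Proof. by rewrite /repP; case: constructive_indefinite_description. Qed.

Lemma repV_spec (c : Vt G) : validV (repV c) /\ sval c = classV (repV c).
Proof. by rewrite /repV; case: constructive_indefinite_description. Qed.

Lemma Pt_coord_inj (P Q : Pt G) : Pcoord (repP P) = Pcoord (repP Q) -> P = Q.
Proof.
move=> E; apply: eq_sig_hprop => [? ? ?|]; first exact: proof_irrelevance.
rewrite (proj2 (repP_spec P)) (proj2 (repP_spec Q)).
apply: functional_extensionality => c; apply: propositional_extensionality.
by rewrite /classP !simP_coord E.
Qed.

Lemma Vt_coord_inj (c d : Vt G) : Vcoord (repV c) = Vcoord (repV d) -> c = d.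
Proof.
move=> E; apply: eq_sig_hprop => [? ? ?|]; first exact: proof_irrelevance.
rewrite (proj2 (repV_spec c)) (proj2 (repV_spec d)).
apply: functional_extensionality => b; apply: propositional_extensionality.
by rewrite /classV !approxV_coord E.
Qed.

Lemma mkP_coord a (dflt : MorE G) : validP a ->
  exists P, mkP a dflt = inr P /\ Pcoord (repP P) = Pcoord a.
Proof.
move=> H; rewrite /mkP; case: excluded_middle_informative => // h.
eexists; split; first reflexivity.
set P := exist _ _ _; have [H1 H2] := repP_spec P.
have : sval P (repP P) by rewrite H2; split=> //; apply/simP_coord.
by case=> _ /simP_coord.
Qed.

Lemma mkV_coord a (dflt : ObjE G) : validV a ->
  exists c, mkV a dflt = inr c /\ Vcoord (repV c) = Vcoord a.
Proof.
move=> H; rewrite /mkV; case: excluded_middle_informative => // h.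
eexists; split; first reflexivity.
set c := exist _ _ _; have [H1 H2] := repV_spec c.
have : sval c (repV c) by rewrite H2; split=> //; apply/approxV_coord.
by case=> _ /approxV_coord.
Qed.

Definition ocoord (o : ObjE G) : Obj G + (Obj G * Nk k) :=
  match o with inl v => inl v | inr c => inr (Vcoord (repV c)) end.

Definition mcoord (f : MorE G) : Mor G + (Mor G * Nk k * Nk k) :=
  match f with inl l => inl l | inr P => inr (Pcoord (repP P)) end.

Lemma ocoord_inj : injective ocoord.
Proof. by case=> [u|c] [u'|c'] //= [] E; [rewrite E | rewrite (Vt_coord_inj E)]. Qed.

Lemma mcoord_inj : injective mcoord.
Proof. by case=> [u|c] [u'|c'] //= [] E; [rewrite E | rewrite (Pt_coord_inj E)]. Qed.

Definition pseg (P : Pt G) := (Pcoord (repP P)).1.1.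
Definition poff (P : Pt G) := (Pcoord (repP P)).1.2.
Definition plen (P : Pt G) := (Pcoord (repP P)).2.

Lemma Pcoord_repP (P : Pt G) : Pcoord (repP P) = (pseg P, poff P, plen P).
Proof. by rewrite /pseg /poff /plen; case: (Pcoord (repP P)) => [[]]. Qed.

Lemma Pt_eq (P Q : Pt G) : pseg P = pseg Q -> poff P = poff Q -> plen P = plen Q -> P = Q.
Proof. by move=> *; apply: Pt_coord_inj; rewrite !Pcoord_repP; congr (_, _, _). Qed.

Lemma mkP_pcoord a (dflt : MorE G) : validP a ->
  exists P, mkP a dflt = inr P /\ (pseg P, poff P, plen P) = Pcoord a.
Proof. by move=> /(mkP_coord dflt) [P [E1 E2]]; exists P; rewrite -Pcoord_repP. Qed.

Lemma mcoord_inr f s o l : mcoord f = inr (s, o, l) ->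
  exists P, [/\ f = inr P, pseg P = s, poff P = o & plen P = l].
Proof. by case: f => //= P [E]; exists P; rewrite /pseg /poff /plen E. Qed.

Lemma ocoord_inl (o : ObjE G) v : ocoord o = inl v -> o = inl v.
Proof. by case: o => //= ? [->]. Qed.

Lemma ocoord_inr (o : ObjE G) t : ocoord o = inr t ->
  exists c, o = inr c /\ Vcoord (repV c) = t.
Proof. by case: o => //= c [E]; exists c. Qed.

Lemma validP_meetI (x : kpath G) m n : validP (x, (m, n)) ->
  [/\ graph_morphism x, lek (meetI m (pdeg x)) (meetI n (pdeg x)) &
      leI (meetI n (pdeg x)) (pdeg x)].
Proof. by case=> /= [[Hx _] [Hmn _]]; split; [| apply: meetI_mono | apply: meetI_leI]. Qed.

(* The last invariant says that the source [[x;n]] is never a vertex of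
   [Lambda]. *)
Lemma Pcoord_inv a : validP a -> let: (s, o, l) := Pcoord a in
  [/\ lek (deg s) l, (forall i, 0 < o i -> deg s i = 0) &
      subk (addk o l) (deg s) != zerok k].
Proof.
case: a => x [m n] Hv; have [Hx H1 H2] := validP_meetI Hv.
case: Hv => /= _ [/lekP Hmn Hn]; rewrite (gm_deg Hx) //; split.
- by apply/lekP => i; move: (Hmn i); nkE; case: (pdeg x i) => *; lia.
- by move=> i; nkE; move: (Hmn i); case: (pdeg x i) => *; lia.
- have [i [c [E Hc]]] := leIPn Hn; apply/eqP => /(congr1 (fun f : Nk k => f i)).
  by nkE; rewrite E; move: (Hmn i); lia.
Qed.

Lemma Pt_inv (P : Pt G) :
  [/\ lek (deg (pseg P)) (plen P), (forall i, 0 < poff P i -> deg (pseg P) i = 0) &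
      subk (addk (poff P) (plen P)) (deg (pseg P)) != zerok k].
Proof. by have := Pcoord_inv (proj1 (repP_spec P)); rewrite Pcoord_repP. Qed.

Lemma Vt_inv (c : Vt G) : (Vcoord (repV c)).2 != zerok k.
Proof.
have := proj1 (repV_spec c).
by case: (repV c) => x m [_ H]; rewrite /= subk_meetI_eq0.
Qed.

End Coordinates.

Section ConcatShift.
Variables (k : nat) (G : kgraph_data k) (HG : is_kgraph G).
Variables (lam : Mor G) (y : kpath G) (r : Nk k).
Hypotheses (Hy : boundary_path y) (Hr : leI r (pdeg y)) (Hlam : sc lam = vert y r).

Local Notation z := (concat lam (shift y r)).

Lemma concat_shiftP : is_concat lam (shift y r) z.
Proof.
apply: (concatP HG); first by case: (boundary_shift Hy Hr).
by rewrite vert_shift Hlam; congr vert; nk_lia.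
Qed.

Lemma boundary_concat_shift : boundary_path z.
Proof. exact: boundary_concat concat_shiftP (boundary_shift Hy Hr). Qed.

Lemma pdeg_concat_shift : pdeg z = addNI (deg lam) (subIN (pdeg y) r).
Proof. by case: concat_shiftP. Qed.

Lemma pmap_concat_shift a t : lek a (deg lam) -> lek r t -> leI t (pdeg y) ->
  pmap z a (addk (deg lam) (subk t r)) = cmp (seg_from lam a) (pmap y r t).
Proof.
move=> Ha /lekP Hrt Ht.
have Ht' : leI (subk t r) (pdeg (shift y r)).
  apply/leIP => i b; rewrite /= subINE; nkE; move/leIP: Ht => /(_ i); move: (Hrt i).
  by case: (pdeg y i) => //= b' ? /(_ b' erefl) ? [<-]; lia.
rewrite (concat_pmap HG concat_shiftP Ha Ht') /=; congr (cmp _ (pmap y _ _)).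
  all: by apply: eq_Nk => i; nkE; move: (Hrt i); lia.
Qed.

End ConcatShift.

Section ExtensionInCoordinates.
Variables (k : nat) (G : kgraph_data k) (HG : is_kgraph G).

Lemma repP_valid (P : Pt G) x m n : repP P = (x, (m, n)) -> validP (x, (m, n)).
Proof. by move=> E; rewrite -E; case: (repP_spec P). Qed.

Lemma repV_valid (c : Vt G) x m : repV c = (x, m) -> validV (x, m).
Proof. by move=> E; rewrite -E; case: (repV_spec c). Qed.

Lemma repP_coord (P : Pt G) x m n : repP P = (x, (m, n)) ->
  [/\ pseg P = pmap x (meetI m (pdeg x)) (meetI n (pdeg x)),
      poff P = subk m (meetI m (pdeg x)) & plen P = subk n m].
Proof. by move=> E; have := Pcoord_repP P; rewrite E => -[<- <- <-]. Qed.

Lemma rgE_coord (P : Pt G) : ocoord (rgE (inr P)) =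
  if poff P == zerok k then inl (rg (pseg P)) else inr (rg (pseg P), poff P).
Proof.
rewrite /rgE; case E: (repP P) => [x [m n]]; have [-> -> _] := repP_coord E.
have Hv := repP_valid E; have [Hx H1 H2] := validP_meetI Hv.
rewrite subk_meetI_eq0 (gm_rg Hx) //; case: ifP => Hm; first by rewrite meetI_id.
have Hv' : validV (x, m) by split; [case: Hv | rewrite /= Hm].
by have [c [-> Ec]] := mkV_coord (inl (vert x m)) Hv'; rewrite /= Ec.
Qed.

Lemma scE_coord (P : Pt G) : ocoord (scE (inr P)) =
  inr (sc (pseg P), subk (addk (poff P) (plen P)) (deg (pseg P))).
Proof.
rewrite /scE; case E: (repP P) => [x [m n]]; have [-> -> ->] := repP_coord E.
have Hv := repP_valid E; have [Hx H1 H2] := validP_meetI Hv.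
have Hv' : validV (x, n) by case: Hv => ? [].
have [c [-> Ec]] := mkV_coord (inl (vert x n)) Hv'; rewrite /= Ec /Vcoord.
rewrite (gm_sc Hx) // (gm_deg Hx) //; congr (inr (_, _)).
case: Hv => _ /= [/lekP Hmn _]; apply: eq_Nk => i; nkE.
by move: (Hmn i); case: (pdeg x i) => *; lia.
Qed.

Lemma degE_inr (P : Pt G) : degE (inr P) = plen P.
Proof. by rewrite /degE; case E: (repP P) => [x [m n]]; have [_ _ ->] := repP_coord E. Qed.

Lemma idmE_coord (c : Vt G) :
  mcoord (idmE (inr c)) = inr (idm (Vcoord (repV c)).1, (Vcoord (repV c)).2, zerok k).
Proof.
rewrite /idmE; case E: (repV c) => [x m]; have [[Hx Hb] Hm] := repV_valid E.
have Hv : validP (x, (m, m)) by split=> //; split; first exact: lek_refl.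
have [P [-> EP]] := mkP_coord (inl (pmap x m m)) Hv; rewrite /= EP /Pcoord.
by rewrite (gm_id Hx) ?meetI_leI //; congr (inr (_, _, _)); nk_lia.
Qed.

Lemma scE_inr (P : Pt G) : exists c, scE (inr P) = inr c.
Proof. by have [c [E _]] := ocoord_inr (scE_coord P); exists c. Qed.

Lemma scE_inr_neq_inl (P : Pt G) v : scE (inr P) <> inl v.
Proof. by have [c ->] := scE_inr P. Qed.

Lemma composable_inl_inr (a : Mor G) (P : Pt G) :
  inl (sc a) = rgE (inr P) <-> poff P = zerok k /\ sc a = rg (pseg P).
Proof.
split=> [H|[H1 H2]]; last by apply: ocoord_inj; rewrite rgE_coord H1 eqxx H2.
by have := rgE_coord P; rewrite -H /=; case: eqP => // E [->].
Qed.

Lemma composable_inr_inr (P Q : Pt G) : scE (inr P) = rgE (inr Q) <->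
  [/\ poff Q != zerok k, rg (pseg Q) = sc (pseg P) &
      poff Q = subk (addk (poff P) (plen P)) (deg (pseg P))].
Proof.
split=> [H|[H1 H2 H3]].
  by have := rgE_coord Q; rewrite -H scE_coord; case: ifP => // /negbT E [-> ->].
by apply: ocoord_inj; rewrite rgE_coord scE_coord (negbTE H1) H2 H3.
Qed.

Lemma Pcoord_comp_inl (a : Mor G) (x : kpath G) m n :
  validP (x, (m, n)) -> leI m (pdeg x) -> sc a = vert x m ->
  let b := (concat a (shift x m), (zerok k, addk (deg a) (subk n m))) in
  validP b /\
  Pcoord b = (cmp a (pmap x m (meetI n (pdeg x))), zerok k, addk (deg a) (subk n m)).
Proof.
move=> [/= Hy [/lekP Hmn Hn]] Hm Ha /=.
have Ed := pdeg_concat_shift HG Hy Hm Ha.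
have [i [c [Ei Hci]]] := leIPn Hn.
split.
  rewrite /validP /=; split; first exact (boundary_concat_shift HG Hy Hm Ha).
  split; first exact: le0k.
  apply/negP => /leIP /(_ i (deg a i + (c - m i))).
  rewrite Ed addNIE subINE Ei /= => /(_ erefl).
  by move: (leI_at i Hm) (Hmn i); rewrite Ei; nkE; lia.
have Em : meetI (addk (deg a) (subk n m)) (pdeg (concat a (shift x m))) =
    addk (deg a) (subk (meetI n (pdeg x)) m).
  apply: eq_Nk => j; rewrite Ed; nkE.
  by move: (leI_at j Hm) (Hmn j); case: (pdeg x j) => /= *; lia.
rewrite /= meetI0 Em (pmap_concat_shift HG Hy Hm Ha (le0k _)) ?meetI_leI ?(seg_from0 HG) //.
  by congr (_, _, _); nk_lia.
by rewrite -{1}(meetI_id Hm); apply/meetI_mono/lekP.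
Qed.

Lemma compE_inl_inr (a : Mor G) (P : Pt G) : inl (sc a) = rgE (inr P) ->
  exists P', [/\ compE (inl a) (inr P) = inr P', pseg P' = cmp a (pseg P),
                 poff P' = zerok k & plen P' = addk (deg a) (plen P)].
Proof.
move/composable_inl_inr; rewrite /compE; case E: (repP P) => [x [m n]].
have [-> -> ->] := repP_coord E; have Hv := repP_valid E.
have [Hx H1 H2] := validP_meetI Hv.
move=> [/eqP]; rewrite subk_meetI_eq0 => Hm; rewrite (gm_rg Hx H1 H2) (meetI_id Hm) => Ha.
have [Hb Eb] := Pcoord_comp_inl Hv Hm Ha.
have [P' [-> EP]] := mkP_coord (inl a) Hb; exists P'.
by rewrite /pseg /poff /plen EP Eb.
Qed.

Lemma Pcoord_comp_inr (x y : kpath G) m n p q :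
  validP (x, (m, n)) -> validP (y, (p, q)) -> Vcoord (x, n) = Vcoord (y, p) ->
  let lam := pmap x (zerok k) (meetI n (pdeg x)) in
  let b := (concat lam (shift y (meetI p (pdeg y))), (m, subk (addk n q) p)) in
  validP b /\ Pcoord b =
    (cmp (pmap x (meetI m (pdeg x)) (meetI n (pdeg x)))
         (pmap y (meetI p (pdeg y)) (meetI q (pdeg y))),
     subk m (meetI m (pdeg x)), addk (subk n m) (subk q p)).
Proof.
move=> Hvx Hvy [Hvert Hoff] lam /=.
have [Hx Hmn' Hn'] := validP_meetI Hvx; have [Hy Hpq' Hq'] := validP_meetI Hvy.
case: Hvx => /= Hbx [/lekP Hmn Hn]; case: Hvy => /= Hby [/lekP Hpq _].
have Hoffj j : n j - meetI n (pdeg x) j = p j - meetI p (pdeg y) j.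
  by move: (congr1 (fun f : Nk k => f j) Hoff); nkE.
have Hlam_deg : deg lam = meetI n (pdeg x) by rewrite (gm_deg Hx (le0k _) Hn'); nk_lia.
have Hlam : sc lam = vert y (meetI p (pdeg y)) by rewrite (gm_sc Hx (le0k _) Hn').
have Hp' := meetI_leI p (pdeg y).
have Ezj j : pdeg (concat lam (shift y (meetI p (pdeg y)))) j =
    omap (addn (meetI n (pdeg x) j)) (omap (subn^~ (meetI p (pdeg y) j)) (pdeg y j)).
  by rewrite (pdeg_concat_shift HG Hby Hp' Hlam) addNIE subINE Hlam_deg.
have [i [c [Ei Hci]]] := leIPn Hn.
split.
  rewrite /validP /=; split; first exact (boundary_concat_shift HG Hby Hp' Hlam).
  split; first by apply/lekP => j /=; nkE; move: (Hmn j) (Hpq j); lia.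
  apply/negP => /(leI_at i); move: (Hoffj i) (Hpq i); rewrite Ezj; nkE; rewrite Ei.
  by case: (pdeg y i) => [e|] /=; lia.
have Em : meetI m (pdeg (concat lam (shift y (meetI p (pdeg y))))) = meetI m (pdeg x).
  apply: eq_Nk => j; move: (Hoffj j) (Hmn j); rewrite !meetIE Ezj; nkE.
  by case: (pdeg x j) => [a|]; case: (pdeg y j) => [b|] /=; lia.
have Eq : meetI (subk (addk n q) p) (pdeg (concat lam (shift y (meetI p (pdeg y))))) =
    addk (deg lam) (subk (meetI q (pdeg y)) (meetI p (pdeg y))).
  apply: eq_Nk => j; move: (Hoffj j) (Hmn j) (Hpq j); rewrite Hlam_deg !meetIE Ezj; nkE.
  by case: (pdeg x j) => [a|]; case: (pdeg y j) => [b|] /=; lia.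
have Hma : lek (meetI m (pdeg x)) (deg lam) by rewrite Hlam_deg.
rewrite /= Em Eq (pmap_concat_shift HG Hby Hp' Hlam Hma Hpq' Hq').
rewrite /lam -(gm_seg_from HG Hx Hmn' Hn'); congr (_, _).
by apply: eq_Nk => j; nkE; move: (Hmn j) (Hpq j); lia.
Qed.

Lemma compE_inr_inr (P Q : Pt G) : scE (inr P) = rgE (inr Q) ->
  exists R, [/\ compE (inr P) (inr Q) = inr R, pseg R = cmp (pseg P) (pseg Q),
                poff R = poff P & plen R = addk (plen P) (plen Q)].
Proof.
rewrite /scE /rgE /compE; case E1: (repP P) => [x [m n]]; case E2: (repP Q) => [y [p q]].
have Hv1 := repP_valid E1; have Hv2 := repP_valid E2.
have [Es1 Eo1 El1] := repP_coord E1; have [Es2 Eo2 El2] := repP_coord E2.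
have Hvn : validV (x, n) by case: Hv1 => ? [].
have [c1 [-> Ec1]] := mkV_coord (inl (vert x n)) Hvn.
case: ifP => Hp //.
have Hvp : validV (y, p) by split; [case: Hv2 | rewrite /= Hp].
have [c2 [-> Ec2]] := mkV_coord (inl (vert y p)) Hvp.
case=> Ec; rewrite Ec Ec2 in Ec1.
have [Hb Eb] := Pcoord_comp_inr Hv1 Hv2 (esym Ec1).
have [R [-> ER]] := mkP_coord (inr P) Hb; exists R.
by rewrite /pseg /poff /plen ER Eb -Es1 -Es2 -Eo1 -El1 -El2.
Qed.

End ExtensionInCoordinates.

Section ExtensionCategory.
Variables (k : nat) (G : kgraph_data k) (HG : is_kgraph G).
Implicit Types (f g h : MorE G) (o : ObjE G) (P Q : Pt G).

Lemma kext_rg_comp f g : scE f = rgE g -> rgE (compE f g) = rgE f.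
Proof.
case: f => [a|P]; case: g => [b|Q] H.
- by rewrite /= (kg_rg_comp HG) //; case: H.
- have [P' [-> E1 E2 _]] := compE_inl_inr HG H; move/composable_inl_inr: H => [_ H].
  by apply: ocoord_inj; rewrite rgE_coord E2 eqxx E1 (kg_rg_comp HG).
- by case: (scE_inr_neq_inl H).
- have [P' [-> E1 E2 _]] := compE_inr_inr HG H; move/composable_inr_inr: H => [_ H _].
  by apply: ocoord_inj; rewrite !rgE_coord E2 E1 (kg_rg_comp HG).
Qed.

Lemma kext_sc_comp f g : scE f = rgE g -> scE (compE f g) = scE g.
Proof.
case: f => [a|P]; case: g => [b|Q] H.
- by rewrite /= (kg_sc_comp HG) //; case: H.
- have [P' [-> E1 E2 E3]] := compE_inl_inr HG H; move/composable_inl_inr: H => [H1 H2].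
  have [/lekP Hi _ _] := Pt_inv Q.
  apply: ocoord_inj; rewrite !scE_coord E1 E2 E3 H1 (kg_sc_comp HG) // (kg_deg_comp HG) //.
  by congr (inr (_, _)); apply: eq_Nk => i; nkE; move: (Hi i); lia.
- by case: (scE_inr_neq_inl H).
- have [P' [-> E1 E2 E3]] := compE_inr_inr HG H; move/composable_inr_inr: H => [_ H2 H3].
  have [/lekP Hi _ _] := Pt_inv P; have [/lekP Hj _ _] := Pt_inv Q.
  apply: ocoord_inj; rewrite !scE_coord E1 E2 E3 H3 (kg_sc_comp HG) // (kg_deg_comp HG) //.
  by congr (inr (_, _)); apply: eq_Nk => i; nkE; move: (Hi i) (Hj i); lia.
Qed.

Lemma kext_deg_comp f g : scE f = rgE g -> degE (compE f g) = addk (degE f) (degE g).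
Proof.
case: f => [a|P]; case: g => [b|Q] H.
- by rewrite /= (kg_deg_comp HG) //; case: H.
- by have [P' [-> _ _ E3]] := compE_inl_inr HG H; rewrite !degE_inr E3.
- by case: (scE_inr_neq_inl H).
- by have [P' [-> _ _ E3]] := compE_inr_inr HG H; rewrite !degE_inr E3.
Qed.

Lemma kext_rg_idm o : rgE (idmE o) = o.
Proof.
case: o => [v|c]; first by rewrite /= (kg_rg_idm HG).
have [P [-> E1 E2 _]] := mcoord_inr (idmE_coord c).
apply: ocoord_inj; rewrite rgE_coord E2 (negbTE (Vt_inv c)) E1 (kg_rg_idm HG) /=.
by case: (Vcoord (repV c)).
Qed.

Lemma kext_sc_idm o : scE (idmE o) = o.
Proof.
case: o => [v|c]; first by rewrite /= (kg_sc_idm HG).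
have [P [-> E1 E2 E3]] := mcoord_inr (idmE_coord c).
apply: ocoord_inj; rewrite scE_coord E1 E2 E3 (kg_sc_idm HG) (kg_deg_idm HG) /=.
have -> : subk (addk (Vcoord (repV c)).2 (zerok k)) (zerok k) = (Vcoord (repV c)).2.
  by nk_lia.
by case: (Vcoord (repV c)).
Qed.

Lemma kext_deg_idm o : degE (idmE o) = zerok k.
Proof.
case: o => [v|c]; first by rewrite /= (kg_deg_idm HG).
by have [P [-> _ _ E3]] := mcoord_inr (idmE_coord c); rewrite degE_inr.
Qed.

Lemma kext_idl f : compE (idmE (rgE f)) f = f.
Proof.
case: f => [a|P]; first by rewrite /= (kg_idl HG).
case E: (poff P == zerok k).
  have Hr : rgE (inr P) = inl (rg (pseg P)) by apply: ocoord_inl; rewrite rgE_coord E.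
  have Hc : inl (sc (idm (rg (pseg P)))) = rgE (inr P) by rewrite Hr (kg_sc_idm HG).
  rewrite Hr; have [P' [-> E1 E2 E3]] := compE_inl_inr HG Hc.
  congr inr; apply: Pt_eq; rewrite ?E1 ?E2 ?E3 ?(kg_idl HG) ?(eqP E) //.
  by rewrite (kg_deg_idm HG); nk_lia.
have [c [Hr Ec]] :=
  ocoord_inr (etrans (rgE_coord P) (congr1 (fun b => if b then _ else _) E)).
rewrite Hr; have [P1 [-> F1 F2 F3]] := mcoord_inr (idmE_coord c).
rewrite Ec /= in F1 F2.
have Hc : scE (inr P1) = rgE (inr P).
  apply/composable_inr_inr; split; [by rewrite E | by rewrite F1 (kg_sc_idm HG) |].
  by rewrite F1 F2 F3 (kg_deg_idm HG); nk_lia.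
have [P' [-> E1 E2 E3]] := compE_inr_inr HG Hc.
by congr inr; apply: Pt_eq; rewrite ?E1 ?E2 ?E3 ?F1 ?F2 ?F3 ?(kg_idl HG) //; nk_lia.
Qed.

Lemma kext_idr f : compE f (idmE (scE f)) = f.
Proof.
case: f => [a|P]; first by rewrite /= (kg_idr HG).
have [c [Hr Ec]] := ocoord_inr (scE_coord P).
rewrite Hr; have [P1 [-> F1 F2 F3]] := mcoord_inr (idmE_coord c).
rewrite Ec /= in F1 F2; have [_ _ Hne] := Pt_inv P.
have Hc : scE (inr P) = rgE (inr P1).
  by apply/composable_inr_inr; split; rewrite ?F2 ?F1 ?(kg_rg_idm HG).
have [P' [-> E1 E2 E3]] := compE_inr_inr HG Hc.
by congr inr; apply: Pt_eq; rewrite ?E1 ?E2 ?E3 ?F1 ?F2 ?F3 ?(kg_idr HG) //; nk_lia.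
Qed.

Lemma kext_assoc f g h : scE f = rgE g -> scE g = rgE h ->
  compE (compE f g) h = compE f (compE g h).
Proof.
case: f => [a|P]; case: g => [b|Q]; case: h => [c|R] H1 H2;
  try by [case: (scE_inr_neq_inl H1) | case: (scE_inr_neq_inl H2)].
- by rewrite /= (kg_assoc HG) //; [case: H1 | case: H2].
- case: H1 => H1.
  have Hc : inl (sc (cmp a b)) = rgE (inr R) by rewrite (kg_sc_comp HG H1).
  rewrite [compE (inl a) (inl b)]/=.
  have [P1 [-> E1 E2 E3]] := compE_inl_inr HG Hc.
  have [P2 [-> F1 F2 F3]] := compE_inl_inr HG H2.
  move/composable_inl_inr: H2 => [G1 G2].
  have Hc' : inl (sc a) = rgE (inr P2).
    by apply/composable_inl_inr; rewrite F1 F2 (kg_rg_comp HG G2).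
  have [P3 [-> K1 K2 K3]] := compE_inl_inr HG Hc'.
  congr inr; apply: Pt_eq; rewrite ?E1 ?E2 ?E3 ?K1 ?K2 ?K3 ?F1 ?F2 ?F3 ?(kg_assoc HG) //.
  by rewrite (kg_deg_comp HG H1); nk_lia.
- have [P1 [E E1 E2 E3]] := compE_inl_inr HG H1.
  have H3 : scE (inr P1) = rgE (inr R) by rewrite -E (kext_sc_comp H1).
  have [P3 [E' F1 F2 F3]] := compE_inr_inr HG H2.
  have H4 : inl (sc a) = rgE (inr P3) by rewrite -E' (kext_rg_comp H2).
  rewrite E E'.
  have [P2 [-> K1 K2 K3]] := compE_inr_inr HG H3.
  have [P4 [-> L1 L2 L3]] := compE_inl_inr HG H4.
  move/composable_inl_inr: H1 => [_ G1]; move/composable_inr_inr: H2 => [_ /esym G2 _].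
  congr inr; apply: Pt_eq;
    rewrite ?K1 ?K2 ?K3 ?L1 ?L2 ?L3 ?E1 ?E2 ?E3 ?F1 ?F2 ?F3 ?(kg_assoc HG) //.
  by nk_lia.
- have [P1 [E E1 E2 E3]] := compE_inr_inr HG H1.
  have H3 : scE (inr P1) = rgE (inr R) by rewrite -E (kext_sc_comp H1).
  have [P3 [E' F1 F2 F3]] := compE_inr_inr HG H2.
  have H4 : scE (inr P) = rgE (inr P3) by rewrite -E' (kext_rg_comp H2).
  rewrite E E'.
  have [P2 [-> K1 K2 K3]] := compE_inr_inr HG H3.
  have [P4 [-> L1 L2 L3]] := compE_inr_inr HG H4.
  move/composable_inr_inr: H1 => [_ /esym G1 _].
  move/composable_inr_inr: H2 => [_ /esym G2 _].
  congr inr; apply: Pt_eq;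
    rewrite ?K1 ?K2 ?K3 ?L1 ?L2 ?L3 ?E1 ?E2 ?E3 ?F1 ?F2 ?F3 ?(kg_assoc HG) //.
  by nk_lia.
Qed.

End ExtensionCategory.

Section ExtensionFactorization.
Variables (k : nat) (G : kgraph_data k) (HG : is_kgraph G).
Implicit Types (P Q : Pt G) (m n : Nk k).

Lemma pmap_split_meetI (x : kpath G) M N a : validP (x, (M, N)) -> lek (addk M a) N ->
  let s := pmap x (meetI M (pdeg x)) (meetI N (pdeg x)) in
  let c := mink a (deg s) in
  [/\ pmap x (meetI M (pdeg x)) (meetI (addk M a) (pdeg x)) = seg_to s c,
      pmap x (meetI (addk M a) (pdeg x)) (meetI N (pdeg x)) = seg_from s c &
      subk (meetI (addk M a) (pdeg x)) (meetI M (pdeg x)) = c].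
Proof.
move=> Hv /lekP HaN s c; have [Hx _ HN] := validP_meetI Hv.
have K1 : lek (meetI M (pdeg x)) (meetI (addk M a) (pdeg x)) by apply/meetI_mono/lek_addr.
have K2 : lek (meetI (addk M a) (pdeg x)) (meetI N (pdeg x)) by apply/meetI_mono/lekP.
have Ec : subk (meetI (addk M a) (pdeg x)) (meetI M (pdeg x)) = c.
  rewrite /c /s (gm_deg Hx) ?(lek_trans K1 K2) //; apply: eq_Nk => i; rewrite minkE; nkE.
  by move: (HaN i); nkE; case: (pdeg x i) => /= *; lia.
by have [-> ->] := gm_split HG Hx K1 K2 HN; rewrite Ec.
Qed.

Definition kext_factorization (l : MorE G) m n (p : MorE G * MorE G) : Prop :=
  scE p.1 = rgE p.2 /\ compE p.1 p.2 = l /\ degE p.1 = m /\ degE p.2 = n.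

Lemma kext_factorizationE l m n f g : kext_factorization l m n (f, g) <->
  [/\ scE f = rgE g, compE f g = l, degE f = m & degE g = n].
Proof. by split=> [[? [? [? ?]]] | [? ? ? ?]]. Qed.

Lemma kext_fact_inl (lam : Mor G) m n : deg lam = addk m n ->
  exists! p, kext_factorization (inl lam) m n p.
Proof.
move=> H; have [[u w] [[U1 [U2 [U3 U4]]] Hu]] := kg_fact HG H.
exists (inl u, inl w); split; first by rewrite /kext_factorization /= U1 U2.
move=> [[u'|Q1] [w'|Q2]] /kext_factorizationE [S1 S2 S3 S4].
- case: S1 S2 => S1 [S2].
  by case: (Hu (u', w') (conj S1 (conj S2 (conj S3 S4)))) => -> ->.
- by have [P' [E _ _ _]] := compE_inl_inr HG S1; rewrite E in S2.
- by case: (scE_inr_neq_inl S1).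
- by have [P' [E _ _ _]] := compE_inr_inr HG S1; rewrite E in S2.
Qed.

Lemma kext_factorization_inr_snd P m n f (w : Mor G) :
  ~ kext_factorization (inr P) m n (f, inl w).
Proof.
by case: f => [u|Q] /kext_factorizationE [S1 S2 _ _]; last case: (scE_inr_neq_inl S1).
Qed.

Lemma kext_factorization_inl_inr P (u : Mor G) Q m n :
  kext_factorization (inr P) m n (inl u, inr Q) ->
  [/\ poff P = zerok k, lek m (deg (pseg P)), u = seg_to (pseg P) m,
      pseg Q = seg_from (pseg P) m & poff Q = zerok k].
Proof.
move/kext_factorizationE => [S1 S2 S3 _]; have {}S3 : deg u = m := S3.
have [P' [E E1 E2 _]] := compE_inl_inr HG S1; rewrite E in S2; case: S2 => S2; subst P'.
move/composable_inl_inr: S1 => [Ho Hsc].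
have [U1 U2] := factor_unique HG Hsc (esym E1); rewrite S3 in U1 U2.
split=> //; rewrite E1 (kg_deg_comp HG Hsc) S3; exact: lek_addr.
Qed.

Lemma kext_factorization_inr_inr P Q1 Q2 m n :
  kext_factorization (inr P) m n (inr Q1, inr Q2) ->
  let c := mink m (deg (pseg P)) in
  [/\ ~~ ((poff P == zerok k) && lek m (deg (pseg P))), pseg Q1 = seg_to (pseg P) c,
      pseg Q2 = seg_from (pseg P) c, poff Q1 = poff P & poff Q2 = subk (addk (poff P) m) c].
Proof.
move/kext_factorizationE => [S1 S2 S3 S4] c; rewrite !degE_inr in S3 S4.
have [R [E E1 E2 _]] := compE_inr_inr HG S1; rewrite E in S2; case: S2 => S2; subst R.
move/composable_inr_inr: S1 => [Hne /esym Hsc Ho2].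
have [/lekP Hq1 _ _] := Pt_inv Q1; have [_ Hq2 _] := Pt_inv Q2.
have Hd1 : deg (pseg Q1) = c.
  apply: eq_Nk => i; rewrite /c E1 minkE (kg_deg_comp HG Hsc) addkE -S3.
  move: (Hq1 i) (Hq2 i) (congr1 (fun f : Nk k => f i) Ho2); nkE.
  by case: (poff Q2 i) => [|?] /=; lia.
have [U1 U2] := factor_unique HG Hsc (esym E1); rewrite Hd1 in U1 U2.
split=> //; last by rewrite Ho2 -E2 Hd1 S3.
apply/negP => /andP [/eqP Ho Hm]; move/eqP: Hne; apply.
have Ecm : c = m by apply: eq_Nk => i; rewrite minkE; move: (lek_at i Hm); lia.
by rewrite Ho2 -E2 Ho Hd1 Ecm S3; nk_lia.
Qed.

Section SplitClass.
Variables (P : Pt G) (a b : Nk k).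
Hypothesis Hab : plen P = addk a b.
Local Notation s := (pseg P).
Local Notation c := (mink a (deg (pseg P))).

(* [[x;(M,N)] = [x;(M, M + a)] [x;(M + a, N)]], where the first factor lies
   in [Lambda] when [M + a <= d(x)]. *)
Lemma Pt_split_snd : exists P2,
  [/\ pseg P2 = seg_from s c, poff P2 = subk (addk (poff P) a) c & plen P2 = b].
Proof.
case E: (repP P) => [x [M N]]; have [Es Eo El] := repP_coord E.
have Hl := Hab; rewrite El in Hl; have Hv := repP_valid E.
case: (Hv) => _ /= [/lekP HMN _].
have HaN : lek (addk M a) N.
  by apply/lekP => i; move: (congr1 (fun f : Nk k => f i) Hl) (HMN i); nkE; lia.
have Hv2 : validP (x, (addk M a, N)) by case: Hv => ? [].
have [P2 [_ EP]] := mkP_pcoord (inr P) Hv2; case: EP => E1 E2 E3.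
have [_ H2 H3] := pmap_split_meetI Hv HaN.
exists P2; rewrite E1 E2 E3 Es Eo -H2 -H3; split=> //; apply: eq_Nk => i.
  by nkE; move: (leI_at i (meetI_leI M (pdeg x))); case: (pdeg x i) => *; lia.
by move: (congr1 (fun f : Nk k => f i) Hl); nkE; lia.
Qed.

Lemma Pt_split_fst : ~~ ((poff P == zerok k) && lek a (deg s)) -> exists P1,
  [/\ pseg P1 = seg_to s c, poff P1 = poff P & plen P1 = a].
Proof.
move=> Hcase; case E: (repP P) => [x [M N]]; have [Es Eo El] := repP_coord E.
have Hl := Hab; rewrite El in Hl; have Hv := repP_valid E.
case: (Hv) => _ /= [/lekP HMN _].
have HaN : lek (addk M a) N.
  by apply/lekP => i; move: (congr1 (fun f : Nk k => f i) Hl) (HMN i); nkE; lia.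
have [H1 _ H3] := pmap_split_meetI Hv HaN.
have Hv1 : validP (x, (M, addk M a)).
  split; first by case: Hv.
  split; first exact: lek_addr.
  apply/negP => Hle; move/negP: Hcase; apply; apply/andP; split.
    by rewrite Eo subk_meetI_eq0; apply: lek_leI_trans Hle; apply: lek_addr.
  have Ha : mink a (deg (pmap x (meetI M (pdeg x)) (meetI N (pdeg x)))) = a.
    by rewrite -H3 (meetI_id Hle) (meetI_id (lek_leI_trans (lek_addr M a) Hle)); nk_lia.
  by rewrite Es -Ha; apply/lekP => i; rewrite minkE geq_minr.
have [P1 [_ EP]] := mkP_pcoord (inr P) Hv1; case: EP => E1 E2 E3.
by exists P1; rewrite E1 E2 E3 Es Eo H1; split=> //; nk_lia.
Qed.

Lemma kext_fact_head_in_graph : poff P = zerok k -> lek a (deg s) ->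
  exists! p, kext_factorization (inr P) a b p.
Proof.
move=> Ho Ha; have [P2 [A1 A2 A3]] := Pt_split_snd.
have Eca : c = a by apply: eq_Nk => i; rewrite minkE; move: (lek_at i Ha); lia.
rewrite Eca in A1 A2; have {}A2 : poff P2 = zerok k by rewrite A2 Ho; nk_lia.
have S1 : inl (sc (seg_to s a)) = rgE (inr P2).
  by apply/composable_inl_inr; rewrite A1 (sc_seg_to HG).
exists (inl (seg_to s a), inr P2); split.
  have [P' [E E1 E2 E3]] := compE_inl_inr HG S1.
  apply/kext_factorizationE; split; rewrite ?E ?degE_inr //; last exact: (deg_seg_to HG).
  congr inr; apply: Pt_eq.
  - by rewrite E1 A1 (comp_seg_to_from HG).
  - by rewrite E2 Ho.
  - by rewrite E3 Hab A3 (deg_seg_to HG).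
move=> [[u|Q1] [w|Q2]] Hf; try by case: (kext_factorization_inr_snd Hf).
  have [_ _ -> E2 E3] := kext_factorization_inl_inr Hf.
  move/kext_factorizationE: Hf => [_ _ _ E4].
  by congr (_, inr _); apply: Pt_eq; rewrite ?A1 ?A2 ?A3 -?(degE_inr Q2).
by case: (kext_factorization_inr_inr Hf); rewrite Ho eqxx Ha.
Qed.

Lemma kext_fact_head_outside : ~~ ((poff P == zerok k) && lek a (deg s)) ->
  exists! p, kext_factorization (inr P) a b p.
Proof.
move=> Hcase; have [P2 [A1 A2 A3]] := Pt_split_snd.
have [P1 [B1 B2 B3]] := Pt_split_fst Hcase.
have Hcs : lek c (deg s) by apply/lekP => i; rewrite minkE geq_minr.
have S1 : scE (inr P1) = rgE (inr P2).
  apply/composable_inr_inr; split; last by rewrite A2 B1 B2 B3 (deg_seg_to HG Hcs).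
    rewrite A2; apply/negP => /eqP Z; move/negP: Hcase; apply; apply/andP.
    split; [apply/eqP/eq_Nk | apply/lekP] => i;
      by move: (congr1 (fun f : Nk k => f i) Z); nkE; rewrite minkE; lia.
  by rewrite A1 B1 (sc_seg_to HG).
exists (inr P1, inr P2); split.
  have [P' [E E1 E2 E3]] := compE_inr_inr HG S1.
  apply/kext_factorizationE; split; rewrite ?E ?degE_inr //.
  congr inr; apply: Pt_eq.
  - by rewrite E1 A1 B1 (comp_seg_to_from HG).
  - by rewrite E2 B2.
  - by rewrite E3 Hab A3 B3.
move=> [[u|Q1] [w|Q2]] Hf; try by case: (kext_factorization_inr_snd Hf).
  by have [Ho Ha _ _ _] := kext_factorization_inl_inr Hf; rewrite Ho eqxx Ha in Hcase.
have [_ E1 E2 E3 E4] := kext_factorization_inr_inr Hf.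
move/kext_factorizationE: Hf => [_ _ E5 E6]; rewrite !degE_inr in E5 E6.
by congr (inr _, inr _); apply: Pt_eq; rewrite ?A1 ?A2 ?A3 ?B1 ?B2 ?B3.
Qed.

End SplitClass.

Lemma kext_fact_inr P m n : plen P = addk m n ->
  exists! p, kext_factorization (inr P) m n p.
Proof.
move=> H; case: (boolP ((poff P == zerok k) && lek m (deg (pseg P)))).
  by case/andP => /eqP Ho Hm; exact: kext_fact_head_in_graph H Ho Hm.
by move=> Hc; exact: kext_fact_head_outside H Hc.
Qed.

Lemma kext_fact (l : MorE G) m n : degE l = addk m n ->
  exists! p, kext_factorization l m n p.
Proof.
by case: l => [lam|P]; [apply: kext_fact_inl | rewrite degE_inr; apply: kext_fact_inr].
Qed.

End ExtensionFactorization.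

Section ExtensionProperties.
Variables (k : nat) (G : kgraph_data k) (HG : is_kgraph G).

Lemma kext_countable : exists f : MorE G -> nat, injective f.
Proof.
have [g Hg] := kg_countable HG.
pose h (t : Mor G + (Mor G * Nk k * Nk k)) : nat + (nat * Nk k * Nk k) :=
  match t with inl l => inl (g l) | inr (s, o, l) => inr (g s, o, l) end.
have Hh : injective h.
  by case=> [a|[[s o] l]] [b|[[s' o'] l']] //= [] => [/Hg -> | /Hg -> -> ->].
exists (fun f => pickle (h (mcoord f))).
by move=> f f' /(pcan_inj pickleK) /Hh /mcoord_inj.
Qed.

Lemma kext_no_sources_inl (v : Obj G) n : exists f, rgE f = inl v /\ degE f = n.
Proof.
have Hb := greedy_path_boundary HG v; have [Hx _] := Hb.
have H0 := vert_greedy_path0 HG v.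
case: (boolP (leI n (pdeg (greedy_path v)))) => Hn.
  exists (inl (pmap (greedy_path v) (zerok k) n)).
  by rewrite /= (gm_rg Hx) ?(gm_deg Hx) ?H0 ?le0k //; split=> //; nk_lia.
have Hv : validP (greedy_path v, (zerok k, n)) by split=> //; split; first exact: le0k.
have [P [_ EP]] := mkP_pcoord (inl (idm v)) Hv; case: EP => E1 E2 E3.
exists (inr P); split; last by rewrite degE_inr E3; nk_lia.
apply: ocoord_inl; rewrite rgE_coord E1 E2 meetI0.
have -> : subk (zerok k) (zerok k) = zerok k by nk_lia.
by rewrite eqxx (gm_rg Hx) ?H0 ?le0k ?meetI_leI.
Qed.

Lemma kext_no_sources_inr (c : Vt G) n : exists f, rgE f = inr c /\ degE f = n.
Proof.
case E: (repV c) => [x m]; have [[Hx Hb] Hm] := repV_valid E.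
have Hv : validP (x, (m, addk m n)).
  split=> //; split; first exact: lek_addr.
  by apply: contra Hm; apply: lek_leI_trans; apply: lek_addr.
have [P [_ EP]] := mkP_pcoord (inl (idm (vert x m))) Hv; case: EP => E1 E2 E3.
exists (inr P); split; last by rewrite degE_inr E3; nk_lia.
apply: ocoord_inj; rewrite rgE_coord E1 E2 subk_meetI_eq0 (negbTE Hm) /= E.
by rewrite (gm_rg Hx) ?meetI_leI //; apply/meetI_mono/lek_addr.
Qed.

End ExtensionProperties.

Theorem theorem3p24 (k : nat) (G : kgraph_data k) (HG : is_kgraph G) :
  is_kgraph (kext G) /\ no_sources (kext G).
Proof.
split; last by case=> [v|c] n; [apply: kext_no_sources_inl | apply: kext_no_sources_inr].
split.
- exact: kext_countable.
- exact: kext_rg_idm.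
- exact: kext_sc_idm.
- exact: kext_rg_comp.
- exact: kext_sc_comp.
- exact: kext_idl.
- exact: kext_idr.
- exact: kext_assoc.
- exact: kext_deg_idm.
- exact: kext_deg_comp.
- exact: kext_fact.
Qed.
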